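(* Let $(\mathbf{c}^*,\mathbf{y}^*,\mathbf{E}^*,\mathbf{z}^* )$ be an optimal solution to $\mathbf{IO}$ with objective value $\mathscr{D}^*$, and let $\mathscr{D}_{opt}$, $j_{opt}$ and $\mathbf{z}_{opt}$ be the results of the algorithm described in the context. Then $\mathscr{D}^*=\mathscr{D}_{opt}$.
   Context: Forward problem $\mathbf{FO}(\mathbf{c})$: maximize $\mathbf{c}'\mathbf{x}$ subject to $\mathbf{A}\mathbf{x}\ge\mathbf{b}$ (relevant constraints, rows $\mathbf{a}_j$, $j\in\{1,\dots,m_1\}$), $\mathbf{W}\mathbf{x}\ge\mathbf{q}$ (trivial constraints); feasible region nonempty, full-dimensional, no redundant constraints. Given observations $\mathbf{x}^k$, $k\in\mathcal{K}=\{1,\dots,K\}$, the multi-observation inverse optimization model $\mathbf{IO}$ is: minimize a distance measure $\mathscr{D}(\mathbf{E},\mathbf{A})\ge0$ over $\mathbf{c},\mathbf{y},\mathbf{E},\mathbf{z}$ subject to $\mathbf{A}\mathbf{z}\ge\mathbf{b}$, $\mathbf{W}\mathbf{z}\ge\mathbf{q}$, $\mathbf{c}'\mathbf{z}=\mathbf{b}'\mathbf{y}$, $\mathbf{z}=\mathbf{x}^k-\epsilon^k$ for all $k$, $\mathbf{A}'\mathbf{y}=\mathbf{c}$, $\|\mathbf{c}\|_L=1$, $\mathbf{y}\ge\mathbf{0}$ ($\mathbf{E}$ has columns $\epsilon^k$). For each $j\in\{1,\dots,m_1\}$ define $\mathbf{BIL}_j$: minimize $\mathscr{D}(\mathbf{E},\mathbf{A})$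 subject to $\mathbf{a}_j\mathbf{z}_j=b_j$, $\mathbf{A}\mathbf{z}_j\ge\mathbf{b}$, $\mathbf{W}\mathbf{z}_j\ge\mathbf{q}$, $\mathbf{z}_j=\mathbf{x}^k-\epsilon^k_j$ for all $k$. The algorithm solves $\mathbf{BIL}_j$ for every $j$ and returns $\mathscr{D}_{opt}$ = the smallest of the optimal values $\mathscr{D}^j_{opt}$, $j_{opt}$ = an index attaining it, and $\mathbf{z}_{opt}$ = the corresponding optimal point. *)

From HB Require Import structures.
From mathcomp Require Import all_boot all_order all_algebra.
Set Implicit Arguments. Unset Strict Implicit. Unset Printing Implicit Defensive.
Import Order.TTheory GRing.Theory Num.Theory.
Local Open Scope ring_scope.

Section IODefs.
Variable R : realFieldType.

Definition dotv (n : nat) (c x : 'cV[R]_n) : R := (c^T *m x) 0 0.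

Definition vge (m : nat) (u v : 'cV[R]_m) : Prop := forall i, v i 0 <= u i 0.

Definition is_norm (n : nat) (nrm : 'cV[R]_n -> R) : Prop :=
  [/\ forall x, 0 <= nrm x,
      forall x, nrm x = 0 -> x = 0,
      forall (a : R) x, nrm (a *: x) = `|a| * nrm x
    & forall x y, nrm (x + y) <= nrm x + nrm y].

Variables (n m1 m2 K : nat).
Variables (A : 'M[R]_(m1, n)) (b : 'cV[R]_m1) (W : 'M[R]_(m2, n)) (q : 'cV[R]_m2).

Definition FO_feasible (x : 'cV[R]_n) : Prop := vge (A *m x) b /\ vge (W *m x) q.

Definition FO_nonempty : Prop := exists x, FO_feasible x.
Definition FO_fulldim : Prop :=
  exists x, exists e : R, 0 < e /\
    forall d : 'cV[R]_n, (forall i, `|d i 0| <= e) -> FO_feasible (x + d).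
Definition FO_no_redundant : Prop :=
  (forall j : 'I_m1, exists x,
     (forall i, i != j -> b i 0 <= (A *m x) i 0) /\ vge (W *m x) q
     /\ (A *m x) j 0 < b j 0) /\
  (forall j : 'I_m2, exists x,
     vge (A *m x) b /\ (forall i, i != j -> q i 0 <= (W *m x) i 0)
     /\ (W *m x) j 0 < q j 0).

Variables (X : 'M[R]_(n, K)) (* columns are the observations x^k *)
          (nrm : 'cV[R]_n -> R)
          (D : 'M[R]_(m1, n) -> 'M[R]_(n, K) -> R).

(* feasibility in IO; E has columns eps^k *)
Definition IO_feasible (c : 'cV[R]_n) (y : 'cV[R]_m1) (E : 'M[R]_(n, K))
    (z : 'cV[R]_n) : Prop :=
  [/\ vge (A *m z) b, vge (W *m z) q, dotv c z = dotv b y,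
      forall k : 'I_K, z = col k X - col k E
    & [/\ A^T *m y = c, nrm c = 1 & vge y 0]].

Definition IO_optimal c y E z : Prop :=
  IO_feasible c y E z /\
  forall c' y' E' z', IO_feasible c' y' E' z' -> D A E <= D A E'.

Definition BIL_feasible (j : 'I_m1) (E : 'M[R]_(n, K)) (z : 'cV[R]_n) : Prop :=
  [/\ (A *m z) j 0 = b j 0, vge (A *m z) b, vge (W *m z) q
    & forall k : 'I_K, z = col k X - col k E].

Definition BIL_optimal (j : 'I_m1) E z : Prop :=
  BIL_feasible j E z /\ forall E' z', BIL_feasible j E' z' -> D A E <= D A E'.

End IODefs.

(* An IO-feasible point z has dual multipliers y >= 0 with A'y = c and
   c'z = b'y, so y'(Az - b) = 0: every constraint with y_j > 0 is active at z,
   and y != 0 because ||A'y|| = 1.  Hence (E, z) is feasible for some BIL_j.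
   Conversely, if z is BIL_j-feasible then c = a_j / ||a_j|| and
   y = e_j / ||a_j|| certify z as IO-feasible; a_j != 0 because the j-th
   constraint is not redundant.  The two problems thus range over the same
   pairs (E, z), and their optimal values coincide. *)

From HB Require Import structures.
From mathcomp Require Import all_boot all_order all_algebra.
Set Implicit Arguments. Unset Strict Implicit. Unset Printing Implicit Defensive.
Import Order.TTheory GRing.Theory Num.Theory.
Local Open Scope ring_scope.

Section DotProduct.
Variable R : realFieldType.

Lemma dotvE n (c x : 'cV[R]_n) : dotv c x = \sum_i c i 0 * x i 0.
Proof. by rewrite /dotv !mxE; apply: eq_bigr => i _; rewrite mxE. Qed.

Lemma dotvC n (c x : 'cV[R]_n) : dotv c x = dotv x c.
Proof. by rewrite !dotvE; apply: eq_bigr => i _; rewrite mulrC. Qed.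

Lemma dotvZl n (a : R) (c x : 'cV[R]_n) : dotv (a *: c) x = a * dotv c x.
Proof. by rewrite /dotv linearZ /= -scalemxAl mxE. Qed.

Lemma dotv_delta n (c : 'cV[R]_n) j : dotv (delta_mx j 0) c = c j 0.
Proof. by rewrite dotvC /dotv -colE !mxE. Qed.

Lemma dotv_trmx m n (M : 'M[R]_(m, n)) y z :
  dotv (M^T *m y) z = dotv y (M *m z).
Proof. by rewrite /dotv trmx_mul trmxK mulmxA. Qed.

Lemma mulmx_row_dotv m n (M : 'M[R]_(m, n)) x j :
  (M *m x) j 0 = dotv (row j M)^T x.
Proof. by rewrite /dotv trmxK -row_mul [RHS]mxE. Qed.

Lemma dotv_nonneg_eq0 m (y s : 'cV[R]_m) :
  vge y 0 -> vge s 0 -> dotv y s = 0 -> forall i, y i 0 * s i 0 = 0.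
Proof.
move=> y_ge0 s_ge0; rewrite dotvE => sum0 i.
apply: (psumr_eq0P _ sum0) => // k _.
by move: (y_ge0 k) (s_ge0 k); rewrite !mxE; exact: mulr_ge0.
Qed.

End DotProduct.

Section Norm.
Variables (R : realFieldType) (n : nat) (nrm : 'cV[R]_n -> R).
Hypothesis nrm_norm : is_norm nrm.

Lemma is_norm0 : nrm 0 = 0.
Proof.
by case: nrm_norm => _ _ nrmZ _; rewrite -(scale0r 0) nrmZ normr0 mul0r.
Qed.

Lemma is_norm_gt0 x : x != 0 -> 0 < nrm x.
Proof.
case: nrm_norm => nrm_ge0 nrm_eq0 _ _ x_neq0.
by rewrite lt_def nrm_ge0 andbT; apply: contraNneq x_neq0 => /nrm_eq0/eqP.
Qed.

End Norm.

Section IOversusBIL.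
Variables (R : realFieldType) (n m1 m2 K : nat).
Variables (A : 'M[R]_(m1, n)) (b : 'cV[R]_m1) (W : 'M[R]_(m2, n)) (q : 'cV[R]_m2).
Variables (X : 'M[R]_(n, K)) (nrm : 'cV[R]_n -> R).

Lemma IO_feasible_BIL_feasible c y E z :
  is_norm nrm -> IO_feasible A b W q X nrm c y E z ->
  exists j, BIL_feasible A b W q X j E z.
Proof.
move=> nrm_norm [Az_ge_b Wz_ge_q dual_obj zX [Ay_c nrm_c y_ge0]].
have slackE i : (A *m z - b) i 0 = (A *m z) i 0 - b i 0 by rewrite !mxE.
have slack_ge0 : vge (A *m z - b) 0.
  by move=> i; rewrite slackE mxE subr_ge0; exact: Az_ge_b.
have slack0 : dotv y (A *m z - b) = 0.
  rewrite dotvE; under eq_bigr => i _ do rewrite slackE mulrBr.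
  by rewrite sumrB -!dotvE -dotv_trmx Ay_c dual_obj dotvC subrr.
have /cV0Pn [j y_j] : y != 0.
  apply/eqP => y0; move: nrm_c.
  by rewrite -Ay_c y0 mulmx0 is_norm0 // => /esym/eqP; rewrite oner_eq0.
exists j; split=> //.
have /eqP := dotv_nonneg_eq0 y_ge0 slack_ge0 slack0 j.
by rewrite mulf_eq0 (negbTE y_j) !mxE subr_eq0 => /eqP.
Qed.

Lemma BIL_feasible_IO_feasible j E z :
  is_norm nrm -> row j A != 0 -> BIL_feasible A b W q X j E z ->
  exists c y, IO_feasible A b W q X nrm c y E z.
Proof.
move=> nrm_norm aj_neq0 [active Az_ge_b Wz_ge_q zX].
set a := (row j A)^T.
have nrm_a_gt0 : 0 < nrm a by apply: is_norm_gt0; rewrite // trmx_eq0.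
exists ((nrm a)^-1 *: a), ((nrm a)^-1 *: delta_mx j 0).
split=> //; first by rewrite [dotv b _]dotvC !dotvZl dotv_delta -mulmx_row_dotv active.
split.
- by rewrite -scalemxAr -colE /a tr_row.
- by case: nrm_norm => _ _ -> _; rewrite ger0_norm ?invr_ge0 ?(ltW nrm_a_gt0) // mulVf ?gt_eqF.
- by move=> i; rewrite !mxE mulr_ge0 ?ler0n // invr_ge0 (ltW nrm_a_gt0).
Qed.

Lemma nonredundant_row_neq0 j E z :
  FO_no_redundant A b W q -> BIL_feasible A b W q X j E z -> row j A != 0.
Proof.
move=> [nonred _] [active _ _ _]; have [x [_ [_ Ax_lt_b]]] := nonred j.
apply: contraTneq Ax_lt_b => aj0.
by rewrite -active !mulmx_row_dotv aj0 /dotv !trmx0 !mul0mx ltxx.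
Qed.

End IOversusBIL.

Theorem theorem1 (R : realFieldType) (n m1 m2 K : nat)
  (A : 'M[R]_(m1, n)) (b : 'cV[R]_m1) (W : 'M[R]_(m2, n)) (q : 'cV[R]_m2)
  (X : 'M[R]_(n, K)) (nrm : 'cV[R]_n -> R)
  (D : 'M[R]_(m1, n) -> 'M[R]_(n, K) -> R) :
  FO_nonempty A b W q -> FO_fulldim A b W q -> FO_no_redundant A b W q ->
  is_norm nrm ->
  (forall E, 0 <= D A E) ->
  forall (cs : 'cV[R]_n) (ys : 'cV[R]_m1) (Es : 'M[R]_(n, K)) (zs : 'cV[R]_n)
         (Dstar : R),
  IO_optimal A b W q X nrm D cs ys Es zs -> Dstar = D A Es ->
  (* the algorithm: optimal solutions (E_j, z_j) of BIL_j with values D^j_opt *)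
  forall (Dj : 'I_m1 -> R) (Ej : 'I_m1 -> 'M[R]_(n, K)) (zj : 'I_m1 -> 'cV[R]_n),
  (forall j, BIL_optimal A b W q X D j (Ej j) (zj j) /\ Dj j = D A (Ej j)) ->
  forall (Dopt : R) (jopt : 'I_m1) (zopt : 'cV[R]_n),
  Dopt = Dj jopt -> (forall j, Dopt <= Dj j) -> zopt = zj jopt ->
  Dstar = Dopt.
Proof.
move=> _ _ nonred nrm_norm _ cs ys Es zs Dstar [IO_feas IO_min] -> Dj Ej zj BIL_opt
  Dopt jopt zopt -> Dopt_min _.
apply/le_anti/andP; split.
- have [[BIL_feas _] ->] := BIL_opt jopt.
  have [c [y IO_feas']] := BIL_feasible_IO_feasible nrm_norm
    (nonredundant_row_neq0 nonred BIL_feas) BIL_feas.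
  exact: IO_min IO_feas'.
- have [j BIL_feas] := IO_feasible_BIL_feasible nrm_norm IO_feas.
  apply: le_trans (Dopt_min j) _.
  have [[_ BIL_min] ->] := BIL_opt j.
  exact: BIL_min BIL_feas.
Qed.
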